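(* For every integer $n\ge2$, \[ Q_n(x)=\left(\frac{1+\sqrt{5+4x}}2\right)^n+\left(\frac{1-\sqrt{5+4x}}2\right)^n . \]
   Context: For $n\ge1$ let $\Xi_n$ be the poset on $\{x_1,\dots,x_n\}$ whose cover relations are exactly: $x_2\prec x_1$, $x_3\prec x_2$, and for $3\le i\le n-1$, $x_i\prec x_{i+1}$ if $i$ is odd and $x_{i+1}\prec x_i$ if $i$ is even (so $x_1>x_2>x_3<x_4>x_5<\cdots$). A filter of a poset is an up-closed subset. The matchable Lucas cube $\Omega_n$ is the graph whose vertices are the filters of $\Xi_n$, two filters adjacent iff one is obtained from the other by deleting a single element. $q_{n,k}$ denotes the number of induced subgraphs of $\Omega_n$ isomorphic to the $k$-dimensional hypercube, and $Q_n(x)=\sum_{k\ge0}q_{n,k}x^k$ is the cube polynomial of $\Omega_n$. *)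

From HB Require Import structures.
From mathcomp Require Import all_boot all_order all_algebra.
Set Implicit Arguments. Unset Strict Implicit. Unset Printing Implicit Defensive.
Import Order.TTheory GRing.Theory Num.Theory.

(* Elements x_1, ..., x_n of Xi_n are encoded as i : 'I_n, with i <-> x_(i+1). *)

(* Cover relation on 1-based indices: xi_cover p q  <->  x_p < x_q is a cover. *)
Definition xi_cover (p q : nat) : bool :=
  [|| (p == 2) && (q == 1),
      (p == 3) && (q == 2),
      [&& 3 <= p, odd p & q == p.+1]
    | [&& 3 <= q, ~~ odd q & p == q.+1] ].

Definition xi_cov (n : nat) : rel 'I_n := fun a b => xi_cover a.+1 b.+1.

Definition xi_le (n : nat) : rel 'I_n := connect (@xi_cov n).

Definition is_filter (n : nat) (F : {set 'I_n}) : bool :=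
  [forall a, forall b, (xi_le a b && (a \in F)) ==> (b \in F)].

Definition omega_adj (n : nat) (F G : {set 'I_n}) : bool :=
  [exists a, (a \in F) && (G == F :\ a)] || [exists a, (a \in G) && (F == G :\ a)].

Definition cube_adj (k : nat) (A B : {set 'I_k}) : bool :=
  #|(A :\: B) :|: (B :\: A)| == 1.

Definition induced_cube (n k : nat) (S : {set {set 'I_n}}) : bool :=
  [forall F in S, is_filter F] &&
  [exists f : {ffun {set 'I_k} -> {set 'I_n}},
     [&& injectiveb f, S == f @: setT
       & [forall A, forall B, omega_adj (f A) (f B) == cube_adj A B]]].

Definition q_nk (n k : nat) : nat := #|[set S : {set {set 'I_n}} | induced_cube k S]|.

(* cube polynomial Q_n(x) = sum_k q_{n,k} x^k ; q_{n,k} = 0 for k > n since Omega_n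
   has at most 2^n vertices *)
Definition cube_poly (R : nzRingType) (n : nat) : {poly R} :=
  \sum_(k < n.+1) (q_nk n k)%:R *: 'X^k.

From HB Require Import structures.
From mathcomp Require Import all_boot all_order all_algebra.
From mathcomp Require Import ring zify.
Import Order.TTheory GRing.Theory Num.Theory.

Set Implicit Arguments.
Unset Strict Implicit.
Unset Printing Implicit Defensive.

(* An induced k-cube in the graph of filters is an interval
   [set X | G \subset X \subset G :|: D], where G is a filter and D is a k-set
   of elements each of which can be added to G on its own; since filters are
   closed under union, every such interval consists of filters.  Counting the
   choices of D gives
     Q_n(x) = sum over filters G of (1 + x)^m(G),
   m(G) being the number of elements addable to G.  Reading the filters of Xi_n
   as bit strings and splitting off the last two or three bits, this weighted
   count W_n satisfies W_(n+1) = W_n + (1 + x) W_(n-1) for n >= 3, with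
   W_2 = 3 + 2x and W_3 = 4 + 3x.  So does a^n + b^n for the two roots a, b of
   z^2 = z + 1 + x, which are (1 +- sqrt(5 + 4x))/2. *)

Section HammingGraph.
Variable T : finType.
Implicit Types (A B X Y : {set T}) (a b t : T).

Definition symdiff A B : {set T} := (A :\: B) :|: (B :\: A).

Definition hamming1 A B : bool := #|symdiff A B| == 1.

Lemma in_symdiff A B t : (t \in symdiff A B) = (t \in A) (+) (t \in B).
Proof. by rewrite !inE; case: (t \in A); case: (t \in B). Qed.

Lemma symdiffA A B X : symdiff A (symdiff B X) = symdiff (symdiff A B) X.
Proof. by apply/setP => t; rewrite !in_symdiff addbA. Qed.

Lemma symdiffKA A B : symdiff A (symdiff A B) = B.
Proof. by apply/setP => t; rewrite !in_symdiff addbA addbb. Qed.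

Lemma hamming1P A B :
  reflect (exists r, forall t, (t \in B) = (t \in A) (+) (t == r)) (hamming1 A B).
Proof.
apply: (iffP cards1P) => [[r /setP AB_r]|[r AB_r]]; exists r.
  by move=> t; have := AB_r t; rewrite in_symdiff inE => <-; rewrite addbA addbb.
by apply/setP => t; rewrite in_symdiff AB_r inE addbA addbb.
Qed.

Lemma hamming1_setD1 A a : a \in A -> hamming1 A (A :\ a).
Proof.
move=> Aa; apply/hamming1P; exists a => t; rewrite !inE.
by case: eqP => [->|_]; rewrite ?Aa ?addbF.
Qed.

Lemma hamming1_common_neighbour Y X a b : a != b ->
    hamming1 X (symdiff Y [set a]) -> hamming1 X (symdiff Y [set b]) ->
  X = Y \/ X = symdiff (symdiff Y [set a]) [set b].
Proof.
move=> neq_ab /hamming1P[r Xr] /hamming1P[r' Xr'].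
have inX t : (t \in X) = (t \in Y) (+) (t == a) (+) (t == r).
  by have := Xr t; rewrite in_symdiff inE => ->; rewrite -addbA addbb addbF.
have ar_br' t : (t == a) (+) (t == r) = (t == b) (+) (t == r').
  apply: (@addbI (t \in Y)); rewrite !addbA -inX.
  by have := Xr' t; rewrite in_symdiff inE => ->; rewrite -addbA addbb addbF.
have [r_a|neq_ra] := eqVneq r a.
  by left; apply/setP => t; rewrite inX r_a -addbA addbb addbF.
have r_b : r = b.
  have := ar_br' b; have := ar_br' a; rewrite !eqxx (negbTE neq_ab).
  rewrite [a == r]eq_sym (negbTE neq_ra) /= => /esym/eqP <-.
  by rewrite [b == a]eq_sym (negbTE neq_ab) => /eqP/esym.
by right; apply/setP => t; rewrite inX !in_symdiff !inE r_b.
Qed.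

Lemma imsetD1_inj (aT : finType) (g : aT -> T) (A : {set aT}) i :
  injective g -> g @: (A :\ i) = g @: A :\ g i.
Proof.
move=> g_inj; apply/setP => t; rewrite !inE.
apply/imsetP/andP => [[j /setD1P[ne_ji Aj] ->]|[ne_ti /imsetP[j Aj t_gj]]].
  by rewrite (inj_eq g_inj) ne_ji; split => //; apply: imset_f.
by exists j => //; rewrite !inE Aj andbT -(inj_eq g_inj) -t_gj.
Qed.

Lemma symdiff_set1 A a : a \in A -> symdiff A [set a] = A :\ a.
Proof.
move=> Aa; apply/setP => t; rewrite in_symdiff !inE.
by case: eqP => [->|_]; rewrite ?Aa ?addbF ?andbT.
Qed.

End HammingGraph.

Section Subcubes.
Variable T : finType.
Implicit Types G D X Y : {set T}.

Lemma hypercube_embedding_rigid k (f : {set 'I_k} -> {set T}) :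
    injective f -> (forall A B : {set 'I_k}, hamming1 A B -> hamming1 (f A) (f B)) ->
  exists2 tau : 'I_k -> T, injective tau & forall A, f A = symdiff (f set0) (tau @: A).
Proof.
move=> f_inj f_adj.
have /fin_all_exists[tau tauP] i :
    exists r, forall t, (t \in f [set i]) = (t \in f set0) (+) (t == r).
  by apply/hamming1P/f_adj/hamming1P; exists i => t; rewrite !inE.
have tau_inj : injective tau.
  by move=> i j tau_ij; apply/set1_inj/f_inj/setP => t; rewrite !tauP tau_ij.
have imD1 (A : {set 'I_k}) i : i \in A -> tau @: (A :\ i) = symdiff (tau @: A) [set tau i].
  by move=> Ai; rewrite imsetD1_inj // symdiff_set1 // imset_f.
exists tau => // A; have [m] := ubnP #|A|; elim: m A => // m IH A.
rewrite ltnS => le_Am.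
have [->|[i Ai]] := set_0Vmem A.
  by rewrite imset0; apply/setP => t; rewrite in_symdiff inE addbF.
have [Ai0|[j Aij]] := set_0Vmem (A :\ i).
  have -> : A = [set i] by apply/eqP; rewrite eqEsubset sub1set Ai andbT -setD_eq0 Ai0.
  by rewrite imset_set1; apply/setP => t; rewrite tauP in_symdiff inE.
have [ne_ji Aj] := setD1P Aij.
have lt_A (B : {set 'I_k}) l : l \in A -> B \subset A :\ l -> #|B| < m.
  by move=> Al /subset_leq_card; have := cardsD1 l A; rewrite Al; lia.
have IHi := IH _ (lt_A _ _ Ai (subxx _)).
have IHj := IH _ (lt_A _ _ Aj (subxx _)).
have IHij := IH _ (lt_A _ _ Ai (subD1set _ _)).
set Y := symdiff (f set0) (tau @: A).
(* [f A] is a common neighbour of [f (A :\ i)] and [f (A :\ j)]; the only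
   other one is [f (A :\ i :\ j)]. *)
have [//|fA] : f A = Y \/ f A = symdiff (symdiff Y [set tau i]) [set tau j].
  apply: hamming1_common_neighbour; first by rewrite (inj_eq tau_inj) eq_sym.
    by rewrite -symdiffA -imD1 // -IHi; apply/f_adj/hamming1_setD1.
  by rewrite -symdiffA -imD1 // -IHj; apply/f_adj/hamming1_setD1.
suff /setP/(_ i) : A = A :\ i :\ j by rewrite !inE eqxx Ai andbF.
by apply: f_inj; rewrite fA IHij !imD1 // !symdiffA.
Qed.

Lemma imset_powerset (aT : finType) (g : aT -> T) :
  [set g @: A | A : {set aT} in setT] = powerset (g @: setT).
Proof.
apply/setP => B; rewrite powersetE; apply/imsetP/idP => [[A _ ->]|sub_B].
  exact/imsetS/subsetT.
exists (g @^-1: B) => //; apply/setP => t; apply/idP/imsetP => [Bt|[a + ->]].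
  by have /imsetP[a _ t_ga] := subsetP sub_B t Bt; exists a; rewrite // inE -t_ga.
by rewrite inE.
Qed.

Definition subcube (G D : {set T}) : {set {set T}} :=
  [set X : {set T} | (G \subset X) && (X \subset G :|: D)].

Lemma subcubeE G D : [set G :|: B | B in powerset D] = subcube G D.
Proof.
apply/setP => X; rewrite inE; apply/imsetP/andP => [[B + ->]|[GX XGD]].
  by rewrite powersetE => BD; rewrite subsetUl setUS.
exists (X :\: G); first by rewrite powersetE subDset.
by apply/setP => t; rewrite !inE; case: (boolP (t \in G)) => // /(subsetP GX).
Qed.

Lemma symdiff_image_subcube X D :
  [set symdiff X B | B in powerset D] = subcube (X :\: D) D.
Proof.
apply/setP => Y; rewrite inE; apply/imsetP/andP => [[B + ->]|[GY YGD]].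
  rewrite powersetE => /subsetP BD; split; apply/subsetP => t; rewrite in_symdiff !inE.
    by case/andP=> Dt ->; case: (boolP (t \in B)) => // /BD; rewrite (negbTE Dt).
  case: (boolP (t \in D)) => [_|Dt]; rewrite ?orbT // orbF.
  by rewrite (contraNF (BD t) Dt) addbF.
exists (symdiff X Y); last by rewrite symdiffKA.
rewrite powersetE; apply/subsetP => t; rewrite in_symdiff.
case: (boolP (t \in D)) => // Dt; have := subsetP YGD t; have := subsetP GY t.
by rewrite !inE (negbTE Dt) /= orbF; case: (t \in X); case: (t \in Y) => //= [/(_ isT)|_ /(_ isT)].
Qed.

Definition induced_hypercube k (S : {set {set T}}) : bool :=
  [exists f : {ffun {set 'I_k} -> {set T}},
     [&& injectiveb f, S == f @: setT
       & [forall A, forall B, hamming1 (f A) (f B) == hamming1 A B]]].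

Lemma subcube_induced_hypercube k G D :
  [disjoint G & D] -> #|D| = k -> induced_hypercube k (subcube G D).
Proof.
move=> disGD cardD.
pose sigma i := enum_val (cast_ord (esym cardD) i) : T.
have sigma_inj : injective sigma by move=> i j /enum_val_inj/cast_ord_inj.
have sigmaT : sigma @: setT = D.
  apply/eqP; rewrite eqEcard card_imset // cardsT card_ord cardD leqnn andbT.
  by apply/subsetP => _ /imsetP[i _ ->]; apply: enum_valP.
have sigmaD (A : {set 'I_k}) : sigma @: A \subset D by rewrite -sigmaT; apply/imsetS/subsetT.
have GD_sigma (A : {set 'I_k}) : (G :|: sigma @: A) :&: D = sigma @: A.
  by rewrite setIUl (disjoint_setI0 disGD) set0U; apply/setIidPl/sigmaD.
apply/existsP; exists [ffun A : {set 'I_k} => G :|: sigma @: A]; apply/and3P; split.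
- apply/injectiveP => A B; rewrite !ffunE => eqAB.
  by apply: (imset_inj sigma_inj); rewrite -GD_sigma eqAB GD_sigma.
- by rewrite -subcubeE -sigmaT -imset_powerset -imset_comp; apply/eqP/eq_imset => A; rewrite ffunE.
- apply/forallP => A; apply/forallP => B; rewrite !ffunE /hamming1.
  suff -> : symdiff (G :|: sigma @: A) (G :|: sigma @: B) = sigma @: symdiff A B.
    by rewrite card_imset.
  apply/setP => t; rewrite in_symdiff !inE.
  case: (boolP (t \in D)) => [|Dt]; last first.
    by rewrite !(negbTE (contra (subsetP (sigmaD _) t) Dt)) addbb.
  rewrite -sigmaT => /imsetP[i _ ->]; rewrite !mem_imset // in_symdiff.
  by rewrite (disjointFl disGD) // -sigmaT imset_f.
Qed.

Lemma induced_hypercubeP k S :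
  reflect (exists G D, [/\ [disjoint G & D], #|D| = k & S = subcube G D])
          (induced_hypercube k S).
Proof.
apply: (iffP idP) => [|[G [D [disGD cardD ->]]]]; last exact: subcube_induced_hypercube.
case/existsP=> f /and3P[/injectiveP f_inj /eqP ->] /forallP f_adj.
have [|tau tau_inj fE] := @hypercube_embedding_rigid k f f_inj.
  by move=> A B; have /forallP/(_ B)/eqP -> := f_adj A.
exists (f set0 :\: tau @: setT), (tau @: setT); split.
- by rewrite -setI_eq0 setIDAC setDIl setDv setI0.
- by rewrite card_imset // cardsT card_ord.
rewrite -symdiff_image_subcube -imset_powerset -imset_comp.
by rewrite (eq_imset _ fE).
Qed.

Section UnionClosedFamily.
Variable P : pred {set T}.
Hypothesis P_setU : forall X Y, P X -> P Y -> P (X :|: Y).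

Definition addable G : {set T} := [set t | (t \notin G) && P (t |: G)].

Lemma disjoint_addable G D : D \subset addable G -> [disjoint G & D].
Proof.
move=> /subsetP DG; rewrite disjoint_sym; apply/pred0P => t /=.
by apply/negbTE/andP => -[/DG]; rewrite inE => /andP[/negbTE ->].
Qed.

Lemma P_setU_addable G D : P G -> D \subset addable G -> P (G :|: D).
Proof.
move=> PG; rewrite -[D]set_enum; elim: (enum D) => [_|t s IH].
  by rewrite set_nil setU0.
rewrite set_cons subUset sub1set inE => /andP[/andP[_ PtG] /IH PGs].
suff -> : G :|: (t |: [set:: s]) = (t |: G) :|: (G :|: [set:: s]) by apply: P_setU.
by apply/setP => u; rewrite !inE; case: (u \in G); rewrite /= ?orbT ?orbF.
Qed.

Lemma forall_in_subcube G D :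
  [disjoint G & D] -> [forall X in subcube G D, P X] = P G && (D \subset addable G).
Proof.
move=> disGD; apply/forallP/andP => [allP|[PG DG] X].
  have PX X : X \in subcube G D -> P X by move/(implyP (allP X)).
  split; first by apply: PX; rewrite inE subxx subsetUl.
  apply/subsetP => t Dt; rewrite inE (disjointFl disGD Dt) PX // inE subsetUr.
  by rewrite subUset sub1set !inE Dt orbT subsetUl.
apply/implyP; rewrite -subcubeE => /imsetP[B + ->]; rewrite powersetE => BD.
exact/P_setU_addable/(subset_trans BD).
Qed.

Lemma subcube_inj G D G' D' : [disjoint G & D] -> [disjoint G' & D'] ->
  subcube G D = subcube G' D' -> G = G' /\ D = D'.
Proof.
have le_bottom X Y Z W : subcube X Y = subcube Z W -> Z \subset X.
  move=> eqS; have : X \in subcube Z W by rewrite -eqS inE subxx subsetUl.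
  by rewrite inE => /andP[].
have le_top X Y W : [disjoint X & Y] -> subcube X Y = subcube X W -> Y \subset W.
  move=> disXY eqS; have : X :|: Y \in subcube X W by rewrite -eqS inE subsetUl subxx.
  rewrite inE => /andP[_ /subsetP XYW].
  by apply/subsetP => t Yt; have := XYW t; rewrite !inE Yt (disjointFl disXY Yt) orbT => /(_ isT).
move=> disGD disGD' eqS.
have eqG : G = G'.
  by apply/eqP; rewrite eqEsubset (le_bottom _ _ _ _ eqS) (le_bottom _ _ _ _ (esym eqS)).
rewrite -eqG in disGD' eqS *; split=> //.
by apply/eqP; rewrite eqEsubset (le_top _ _ _ disGD eqS) (le_top _ _ _ disGD' (esym eqS)).
Qed.

Theorem card_induced_hypercubes k :
  #|[set S : {set {set T}} | [forall X in S, P X] && induced_hypercube k S]|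
    = \sum_(G | P G) 'C(#|addable G|, k).
Proof.
pose pairs := [set GD : {set T} * {set T} | [&& P GD.1, GD.2 \subset addable GD.1 & #|GD.2| == k]].
have -> : [set S : {set {set T}} | [forall X in S, P X] && induced_hypercube k S]
          = [set subcube GD.1 GD.2 | GD in pairs].
  apply/setP => S; rewrite inE; apply/andP/imsetP => [[allP]|[[G D] + ->]].
    case/induced_hypercubeP=> G [D [disGD cardD eqS]]; exists (G, D) => //.
    by move: allP; rewrite inE eqS forall_in_subcube // cardD eqxx andbT.
  rewrite inE /= => /and3P[PG DG /eqP cardD]; have disGD := disjoint_addable DG.
  by rewrite forall_in_subcube // PG DG; split=> //; apply/induced_hypercubeP; exists G, D.
rewrite card_in_imset; last first.
  move=> [G D] [G' D']; rewrite !inE /= => /and3P[_ /disjoint_addable disGD _].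
  by case/and3P=> _ /disjoint_addable disGD' _ /(subcube_inj disGD disGD') [-> ->].
rewrite -sum1dep_card.
rewrite -(pair_big_dep P (fun G D => (D \subset addable G) && (#|D| == k)) (fun _ _ => 1%N)).
by apply: eq_bigr => G _; rewrite sum1dep_card cards_draws.
Qed.

End UnionClosedFamily.

End Subcubes.

(* Positions past the end of a bit string read as [true]: absent elements
   behave as members of the filter and impose no condition. *)
Local Notation bit s i := (nth true s i).

Fixpoint bitseqs n : seq (seq bool) :=
  if n is m.+1 then [seq rcons s b | s <- bitseqs m, b <- [:: false; true]] else [:: [::]].

Lemma size_bitseqs n s : s \in bitseqs n -> size s = n.
Proof.
elim: n s => [|n IH] s /=; first by rewrite inE => /eqP ->.
by case/flatten_mapP => s' /IH size_s'; rewrite !inE => /orP[] /eqP ->; rewrite size_rcons size_s'.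
Qed.

Section BitseqSums.
Variable R : nmodType.
Local Open Scope ring_scope.

Lemma big_bitseqsS n (F : seq bool -> R) :
  \sum_(s <- bitseqs n.+1) F s = \sum_(s <- bitseqs n) (F (rcons s false) + F (rcons s true)).
Proof.
by rewrite /= big_flatten big_map; apply: eq_bigr => s _; rewrite /= !big_cons big_nil addr0.
Qed.

Lemma eq_big_bitseqs n (F G : seq bool -> R) : (forall s, size s = n -> F s = G s) ->
  \sum_(s <- bitseqs n) F s = \sum_(s <- bitseqs n) G s.
Proof. by move=> FG; rewrite !big_seq; apply: eq_bigr => s /size_bitseqs/FG. Qed.

End BitseqSums.

Section Fence.
(* [up i] orients the pair [i], [i.+1]: [i] lies below [i.+1] iff [up i]. *)
Variable up : nat -> bool.

Definition fence_cov i j := (up i && (j == i.+1)) || (~~ up j && (i == j.+1)).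

Definition fence_edge (s : seq bool) i :=
  if up i then bit s i ==> bit s i.+1 else bit s i.+1 ==> bit s i.

Definition fence_filter (s : seq bool) := all (fence_edge s) (iota 0 (size s).-1).

Definition fence_addable (s : seq bool) i :=
  [&& ~~ bit s i, up i ==> bit s i.+1 & (0 < i) && ~~ up i.-1 ==> bit s i.-1].

Lemma bit_rcons s b i : bit (rcons s b) i = if i == size s then b else bit s i.
Proof. by rewrite nth_rcons; case: ltngtP => // lt_s_i; rewrite !nth_default // ltnW. Qed.

Lemma bit_rcons_lt s b i : i < size s -> bit (rcons s b) i = bit s i.
Proof. by move=> lt_is; rewrite nth_rcons lt_is. Qed.

Lemma iota0S n : iota 0 n.+1 = rcons (iota 0 n) n.
Proof. by rewrite -addn1 iotaD cats1. Qed.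

Lemma count_iota0S (p : pred nat) n : count p (iota 0 n.+1) = count p (iota 0 n) + p n.
Proof. by rewrite iota0S -cats1 count_cat /= addn0. Qed.

Lemma fence_filter_rcons2 s a b :
  fence_filter (rcons (rcons s a) b)
    = fence_filter (rcons s a) && (if up (size s) then a ==> b else b ==> a).
Proof.
rewrite /fence_filter !size_rcons !succnK iota0S all_rcons andbC; congr andb.
  apply/eq_in_all => i; rewrite mem_iota => /andP[_ lt_i].
  by rewrite /fence_edge !(bit_rcons (rcons s a) b) size_rcons !ifN_eq //; lia.
by rewrite /fence_edge !bit_rcons !size_rcons !eqxx (ltn_eqF (ltnSn _)).
Qed.

Lemma eq_count_fence_addable s t m :
    (forall j, j < m -> bit s j = bit t j) -> (up m.-1 -> bit s m = bit t m) ->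
  count (fence_addable s) (iota 0 m) = count (fence_addable t) (iota 0 m).
Proof.
move=> eq_lt eq_m; apply/eq_in_count => i; rewrite mem_iota => /andP[_ lt_im].
rewrite /fence_addable eq_lt // (eq_lt i.-1); last by lia.
case: (ltnP i.+1 m) => [lt_Sim|le_mSi]; first by rewrite eq_lt.
have -> : i = m.-1 by lia.
by case: (boolP (up m.-1)) => // /eq_m; rewrite prednK ?(leq_ltn_trans _ lt_im) // => ->.
Qed.

Section Weight.
Variables (R : comNzRingType) (y : R).
Local Open Scope ring_scope.

Definition fence_weight s : R :=
  if fence_filter s then y ^+ count (fence_addable s) (iota 0 (size s)) else 0.

Lemma fence_weight_rcons_true s a :
  fence_weight (rcons (rcons s a) true)
    = if up (size s) || a then fence_weight (rcons s a) else 0.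
Proof.
rewrite /fence_weight fence_filter_rcons2 implybT.
have -> : (if up (size s) then true else true ==> a) = up (size s) || a by case: up.
case: (up _ || a); rewrite ?andbF ?andbT //.
have addable_true (x : seq bool) : fence_addable (rcons x true) =1 fence_addable x.
  by move=> i; rewrite /fence_addable !nth_rcons_default.
rewrite [size (rcons (rcons _ _) _)]size_rcons count_iota0S (eq_count (addable_true _)).
by rewrite {2}/fence_addable nth_rcons_default nth_default ?addn0.
Qed.

Lemma fence_weight_rcons_false_down s a : ~~ up (size s) ->
  fence_weight (rcons (rcons s a) false) = y ^+ a * fence_weight (rcons s a).
Proof.
move=> down_s; rewrite /fence_weight fence_filter_rcons2 (negbTE down_s) implyFb andbT.
case: fence_filter; last by rewrite mulr0.
rewrite -exprD [size (rcons (rcons _ _) _)]size_rcons count_iota0S addnC; congr (_ ^+ (_ + _)).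
  rewrite /fence_addable !bit_rcons !size_rcons !eqxx /= !ifN_eq ?nth_default ?down_s //; lia.
apply: eq_count_fence_addable => [j lt_j|]; first by rewrite bit_rcons_lt.
by rewrite size_rcons (negbTE down_s).
Qed.

Lemma fence_weight_rcons_false_up s a : up (size s).+1 -> ~~ up (size s) ->
  fence_weight (rcons (rcons (rcons s a) false) false) = y * fence_weight (rcons s a).
Proof.
move=> up_s1 down_s.
have filterE : fence_filter (rcons (rcons (rcons s a) false) false) = fence_filter (rcons s a).
  by rewrite !fence_filter_rcons2 size_rcons up_s1 (negbTE down_s) /= !andbT.
rewrite /fence_weight filterE; case: fence_filter; last by rewrite mulr0.
rewrite -exprS; congr (_ ^+ _).
rewrite size_rcons (size_rcons (rcons s a)) !count_iota0S.
have -> : fence_addable (rcons (rcons (rcons s a) false) false) (size (rcons s a)) = false.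
  by rewrite /fence_addable !bit_rcons !size_rcons !eqxx /= up_s1 !ifN_eq //; lia.
have -> : fence_addable (rcons (rcons (rcons s a) false) false) (size (rcons s a)).+1.
  rewrite /fence_addable !bit_rcons !size_rcons !eqxx /= up_s1.
  by rewrite !ifN_eq ?nth_default ?implybT //; lia.
rewrite addn0 addn1; congr _.+1.
apply: eq_count_fence_addable => [j lt_j|].
  have lt_j' : (j < size (rcons (rcons s a) false))%N by rewrite size_rcons ltnW.
  by rewrite (bit_rcons_lt _ lt_j') (bit_rcons_lt _ lt_j).
by rewrite size_rcons (negbTE down_s).
Qed.

Lemma fence_weight_rcons_true_false s : up (size s) ->
  fence_weight (rcons (rcons s true) false) = 0.
Proof. by move=> up_s; rewrite /fence_weight fence_filter_rcons2 up_s andbF. Qed.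

Definition fence_sum n := \sum_(s <- bitseqs n) fence_weight s.

Lemma sum_fence_weight_rcons_true m : up m.+1 ->
  \sum_(s <- bitseqs m.+2) fence_weight (rcons s true) = fence_sum m.+2.
Proof.
move=> up_m1; rewrite /fence_sum [LHS]big_bitseqsS [RHS]big_bitseqsS.
by apply: eq_big_bitseqs => s size_s; rewrite !fence_weight_rcons_true size_s up_m1.
Qed.

Lemma sum_fence_weight_rcons_false m : up m.+1 -> ~~ up m ->
  \sum_(s <- bitseqs m.+2) fence_weight (rcons s false) = y * fence_sum m.+1.
Proof.
move=> up_m1 down_m; rewrite 2!big_bitseqsS /fence_sum big_bitseqsS mulr_sumr.
apply: eq_big_bitseqs => s size_s.
rewrite !fence_weight_rcons_true_false ?size_rcons ?size_s // !addr0 mulrDr.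
by rewrite !fence_weight_rcons_false_up ?size_s.
Qed.

Lemma fence_sum_rec_up m : up m.+1 -> ~~ up m ->
  fence_sum m.+3 = fence_sum m.+2 + y * fence_sum m.+1.
Proof.
move=> up_m1 down_m; rewrite {1}/fence_sum big_bitseqsS big_split /=.
by rewrite sum_fence_weight_rcons_false // sum_fence_weight_rcons_true // addrC.
Qed.

Lemma fence_sum_rec_down m : ~~ up m -> up m.+1 -> ~~ up m.+2 ->
  fence_sum m.+4 = fence_sum m.+3 + y * fence_sum m.+2.
Proof.
move=> down_m up_m1 down_m2.
have -> : fence_sum m.+4 = \sum_(s <- bitseqs m.+2)
    (fence_weight (rcons s false) + (1 + y) * fence_weight (rcons s true)).
  rewrite /fence_sum 2!big_bitseqsS; apply: eq_big_bitseqs => s size_s.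
  rewrite !fence_weight_rcons_true !fence_weight_rcons_false_down size_s //.
  by rewrite (negbTE down_m2) /= expr0 expr1 addr0; ring.
rewrite big_split /= -mulr_sumr sum_fence_weight_rcons_false //.
by rewrite sum_fence_weight_rcons_true // fence_sum_rec_up //; ring.
Qed.

End Weight.

End Fence.

Definition xi_up i := (2 <= i) && ~~ odd i.

Lemma xi_covE n (a b : 'I_n) : xi_cov a b = fence_cov xi_up a b.
Proof. by rewrite /xi_cov /xi_cover /fence_cov /xi_up; apply/idP/idP => cov_ab; lia. Qed.

Section XiFilters.
Variable n : nat.
Implicit Types F G : {set 'I_n}.

Lemma is_filterP F :
  reflect (forall a b, xi_cov a b -> a \in F -> b \in F) (is_filter F).
Proof.
apply: (iffP forallP) => [Fup a b ab Fa|Fcov a].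
  by have /forallP/(_ b)/implyP := Fup a; apply; rewrite /xi_le connect1.
apply/forallP => b; apply/implyP => /andP[/connectP[p + ->] {b}].
by elim: p a => [|c p IH] a //= /andP[ac /IH Fc_last] Fa; apply/Fc_last/(Fcov _ _ ac Fa).
Qed.

Lemma xi_cov_irr (a : 'I_n) : xi_cov a a = false.
Proof. by rewrite xi_covE /fence_cov !(ltn_eqF (ltnSn _)) !andbF. Qed.

Lemma is_filter_setU F G : is_filter F -> is_filter G -> is_filter (F :|: G).
Proof.
move=> /is_filterP Fup /is_filterP Gup; apply/is_filterP => a b ab.
by rewrite !inE => /orP[/(Fup _ _ ab)|/(Gup _ _ ab)] ->; rewrite ?orbT.
Qed.

Lemma addable_filterE G t : is_filter G ->
  (t \in addable (@is_filter n) G) = (t \notin G) && [forall b, xi_cov t b ==> (b \in G)].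
Proof.
move=> /is_filterP Gup; rewrite inE; case: (boolP (t \in G)) => //= Gt.
apply/is_filterP/forallP => [tGup b|tcov a b ab].
  apply/implyP => tb; have := tGup t b tb; rewrite !inE eqxx => /(_ isT)/orP[/eqP b_t|//].
  by move: tb; rewrite b_t xi_cov_irr.
rewrite !inE => /orP[/eqP a_t|Ga]; last by rewrite (Gup _ _ ab Ga) orbT.
by move: ab; rewrite a_t => /(implyP (tcov b)) ->; rewrite orbT.
Qed.

Definition bits F : seq bool := [seq i \in F | i <- enum 'I_n].

Lemma size_bits F : size (bits F) = n.
Proof. by rewrite size_map size_enum_ord. Qed.

Lemma bit_bits F (i : 'I_n) : bit (bits F) i = (i \in F).
Proof. by rewrite (nth_map i) ?size_enum_ord // nth_ord_enum. Qed.

Lemma is_filter_bits F : is_filter F = fence_filter xi_up (bits F).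
Proof.
rewrite /fence_filter size_bits; apply/is_filterP/allP => [Fup i|edges a b].
  rewrite mem_iota => /andP[_ lt_i]; have lt_i0 : i < n by lia.
  have lt_i1 : i.+1 < n by lia.
  rewrite /fence_edge -[i]/(val (Ordinal lt_i0)) -[i.+1]/(val (Ordinal lt_i1)) !bit_bits.
  by case: ifP => up_i; apply/implyP; apply: Fup; rewrite xi_covE /fence_cov /= up_i eqxx ?orbT.
rewrite xi_covE /fence_cov => /orP[/andP[up_a /eqP b_a]|/andP[down_b /eqP a_b]].
  have a_edge : val a \in iota 0 n.-1 by rewrite mem_iota /=; have := ltn_ord b; lia.
  by have := edges _ a_edge; rewrite /fence_edge up_a -b_a !bit_bits => /implyP.
have b_edge : val b \in iota 0 n.-1 by rewrite mem_iota /=; have := ltn_ord a; lia.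
by have := edges _ b_edge; rewrite /fence_edge (negbTE down_b) -a_b !bit_bits => /implyP.
Qed.

Lemma mem_addable_bits G t : is_filter G ->
  (t \in addable (@is_filter n) G) = fence_addable xi_up (bits G) t.
Proof.
move=> filterG; rewrite addable_filterE // /fence_addable bit_bits; congr andb.
apply/forallP/andP => [tcov|[right left] b].
  split; apply/implyP.
    move=> up_t; case: (ltnP t.+1 n) => [lt_t1|le_n]; last by rewrite nth_default ?size_bits.
    have /implyP := tcov (Ordinal lt_t1); rewrite -[t.+1]/(val (Ordinal lt_t1)) bit_bits; apply.
    by rewrite xi_covE /fence_cov up_t eqxx.
  case/andP=> t_gt0 down_t; have lt_tp : t.-1 < n by have := ltn_ord t; lia.
  have /implyP := tcov (Ordinal lt_tp); rewrite -[t.-1]/(val (Ordinal lt_tp)) bit_bits; apply.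
  by rewrite xi_covE /fence_cov /= down_t prednK ?eqxx ?orbT.
apply/implyP; rewrite xi_covE /fence_cov => /orP[/andP[up_t /eqP b_t]|/andP[down_b /eqP t_b]].
  by have := implyP right up_t; rewrite -b_t bit_bits.
by have := implyP left; rewrite t_b /= down_b => /(_ isT); rewrite bit_bits.
Qed.

Lemma card_addable_bits G : is_filter G ->
  #|addable (@is_filter n) G| = count (fence_addable xi_up (bits G)) (iota 0 n).
Proof.
move=> filterG; rewrite cardE /enum_mem size_filter -enumT -val_enum_ord count_map.
by apply: eq_count => t /=; rewrite mem_addable_bits.
Qed.

End XiFilters.

Definition rcons_set n (Gb : {set 'I_n} * bool) : {set 'I_n.+1} :=
  [set i | if unlift ord_max i is Some j then j \in Gb.1 else Gb.2].

Lemma bits_rcons_set n (G : {set 'I_n}) b : bits (rcons_set (G, b)) = rcons (bits G) b.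
Proof.
rewrite /bits enum_ordSr map_rcons -map_comp inE unlift_none; congr rcons.
apply: eq_map => j /=; have -> : widen_ord (leqnSn n) j = lift ord_max j.
  by apply: val_inj; rewrite /= /bump leqNgt ltn_ord.
by rewrite inE liftK.
Qed.

Lemma rcons_set_bij n : bijective (@rcons_set n).
Proof.
exists (fun G : {set 'I_n.+1} => ([set j | lift ord_max j \in G], ord_max \in G)).
  move=> [G b]; congr pair; last by rewrite inE unlift_none.
  by apply/setP => j; rewrite !inE liftK.
by move=> G; apply/setP => i; rewrite inE; case: unliftP => [j|] ->; rewrite ?inE.
Qed.

Lemma sum_bits (R : nmodType) n (F : seq bool -> R) :
  (\sum_(G : {set 'I_n}) F (bits G) = \sum_(s <- bitseqs n) F s)%R.
Proof.
elim: n F => [|n IH] F.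
  rewrite big_seq1 (big_pred1 set0) => [|G]; last by apply/esym/eqP/setP => -[].
  by have /size0nil -> := size_bits (set0 : {set 'I_0}).
rewrite (reindex (@rcons_set n)) /=; last exact/onW_bij/rcons_set_bij.
rewrite big_bitseqsS -IH -(pair_bigA _ (fun G b => F (bits (rcons_set (G, b))))) /=.
by apply: eq_bigr => G _; rewrite big_bool !bits_rcons_set addrC.
Qed.

Lemma omega_adjE n (F G : {set 'I_n}) : omega_adj F G = hamming1 F G.
Proof.
apply/idP/hamming1P => [|[r FGr]].
  case/orP=> /existsP[a /andP[Fa /eqP->]]; exists a => t; rewrite !inE.
    by case: eqP => [->|_]; rewrite ?Fa ?addbF.
  by case: eqP => [->|_]; rewrite ?Fa ?addbF.
apply/orP; case Fr: (r \in F); [left|right]; apply/existsP; exists r.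
  by rewrite Fr; apply/eqP/setP => t; rewrite FGr !inE; case: eqP => [->|_]; rewrite ?Fr ?addbF.
rewrite FGr Fr eqxx; apply/eqP/setP => t; rewrite !inE FGr.
by case: eqP => [->|_]; rewrite ?Fr ?addbF.
Qed.

Lemma induced_cubeE n k (S : {set {set 'I_n}}) :
  induced_cube k S = [forall X in S, is_filter X] && induced_hypercube k S.
Proof.
congr andb; apply: eq_existsb => f; congr [&& _, _ & _].
by apply: eq_forallb => A; apply: eq_forallb => B; rewrite omega_adjE.
Qed.

Lemma q_nkE n k :
  q_nk n k = \sum_(G : {set 'I_n} | is_filter G) 'C(#|addable (@is_filter n) G|, k).
Proof.
rewrite -card_induced_hypercubes; last exact: is_filter_setU.
by apply: eq_card => S; rewrite !inE induced_cubeE.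
Qed.

Local Open Scope ring_scope.

Lemma exprD1n_widen (R : pzSemiRingType) (x : R) m N : (m <= N)%N ->
  (x + 1) ^+ m = \sum_(i < N.+1) x ^+ i *+ 'C(m, i).
Proof.
move=> le_mN; rewrite exprD1n (big_ord_widen N.+1 (fun i => x ^+ i *+ 'C(m, i))%R) //.
rewrite big_mkcond; apply: eq_bigr => i _; case: ltnP => // le_Sm_i.
by rewrite bin_small ?mulr0n.
Qed.

Lemma horner_cube_poly (R : comNzRingType) n (x : R) :
  (cube_poly R n).[x] = fence_sum xi_up (x + 1) n.
Proof.
rewrite /cube_poly horner_sum.
under eq_bigr => k _ do rewrite hornerZ hornerXn q_nkE natr_sum mulr_suml.
rewrite exchange_big /fence_sum -sum_bits [RHS](bigID (fun G => is_filter G)) /=.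
rewrite [X in _ = _ + X]big1 ?addr0 => [|G]; last first.
  by rewrite /fence_weight -is_filter_bits => /negbTE ->.
apply: eq_bigr => G filterG; rewrite /fence_weight -is_filter_bits filterG.
rewrite size_bits -card_addable_bits // (exprD1n_widen _ (_ : _ <= n)%N); last first.
  by rewrite -[X in (_ <= X)%N]card_ord max_card.
by apply: eq_bigr => k _; rewrite mulr_natl.
Qed.

Section XiFenceSum.
Variables (R : comNzRingType) (y : R).

Lemma xi_fence_sum_rec n : (3 <= n)%N ->
  fence_sum xi_up y n.+1 = fence_sum xi_up y n + y * fence_sum xi_up y n.-1.
Proof.
case: n => [|[|[|m]]] // _; have [odd_m|even_m] := boolP (odd m).
  by apply: fence_sum_rec_down; rewrite /xi_up; lia.
by apply: fence_sum_rec_up; rewrite /xi_up; lia.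
Qed.

Lemma xi_fence_sum2 : fence_sum xi_up y 2 = 1 + y *+ 2.
Proof.
by rewrite /fence_sum /= !big_cons big_nil /fence_weight /= !addn0 !add0n expr0 expr1; ring.
Qed.

Lemma xi_fence_sum3 : fence_sum xi_up y 3 = 1 + y *+ 3.
Proof.
by rewrite /fence_sum /= !big_cons big_nil /fence_weight /= !addn0 !add0n expr0 expr1; ring.
Qed.

End XiFenceSum.

Lemma sum_powers_rec2 (R : comNzRingType) (u : nat -> R) (a b y : R) :
    a + b = 1 -> a ^+ 2 = a + y -> b ^+ 2 = b + y ->
    u 2 = 1 + y *+ 2 -> u 3 = 1 + y *+ 3 ->
    (forall n, (3 <= n)%N -> u n.+1 = u n + y * u n.-1) ->
  forall n, (2 <= n)%N -> u n = a ^+ n + b ^+ n.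
Proof.
move=> ab a2 b2 u2 u3 u_rec.
have pow_rec c k : c ^+ 2 = c + y -> c ^+ k.+2 = c ^+ k.+1 + y * c ^+ k.
  by move=> c2; rewrite -(addn2 k) exprD c2 mulrDr -exprSr mulrC.
pose L k := a ^+ k + b ^+ k.
have L_rec k : L k.+2 = L k.+1 + y * L k.
  by rewrite /L (pow_rec a) // (pow_rec b) // mulrDr addrACA.
have L2 : L 2 = 1 + y *+ 2 by rewrite /L a2 b2 addrACA ab mulr2n.
have L3 : L 3 = 1 + y *+ 3 by rewrite L_rec L2 /L !expr1 ab mulr1 -addrA -mulrSr.
suff L_eq n : u n.+2 = L n.+2 /\ u n.+3 = L n.+3 by case=> [|[|n]] // _; case: (L_eq n).
elim: n => [|n [IH2 IH3]]; first by rewrite u2 u3 L2 L3.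
by split=> //; rewrite u_rec //= IH3 IH2 [RHS]L_rec.
Qed.

Lemma half_root_sqr (F : fieldType) (s y : F) : 2 != 0 :> F ->
  s ^+ 2 = 1 + 4 * y -> ((1 + s) / 2) ^+ 2 = (1 + s) / 2 + y.
Proof.
move=> two_neq0 s2; apply/eqP; rewrite -subr_eq0.
have four_neq0 : 4 != 0 :> F by rewrite -[4%N]/(2 * 2)%N natrM; apply: mulf_neq0.
have -> : ((1 + s) / 2) ^+ 2 - ((1 + s) / 2 + y) = (s ^+ 2 - (1 + 4 * y)) / 4 by field; apply/andP.
by rewrite s2 subrr mul0r.
Qed.

Theorem mainTheorem8 (C : numClosedFieldType) (n : nat) (x : C) :
  (2 <= n)%N ->
  (cube_poly C n).[x] =
    ((1 + sqrtC (5 + 4 * x)) / 2) ^+ n + ((1 - sqrtC (5 + 4 * x)) / 2) ^+ n.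
Proof.
move=> n_ge2; rewrite horner_cube_poly.
have two_neq0 : 2 != 0 :> C by rewrite pnatr_eq0.
have disc : sqrtC (5 + 4 * x) ^+ 2 = 1 + 4 * (x + 1) by rewrite sqrtCK; ring.
apply: sum_powers_rec2 => //.
- by field.
- exact: half_root_sqr two_neq0 disc.
- by apply: half_root_sqr two_neq0 _; rewrite sqrrN.
- exact: xi_fence_sum2.
- exact: xi_fence_sum3.
- exact: xi_fence_sum_rec.
Qed.
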